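(* (Completeness of MPLP.) Let $G=(\mathcal{V},\mathcal{E})$ be a finite directed graph with a start vertex $s_0$ and a goal region $\mathcal{G}\subseteq\mathcal{V}$, each edge $e$ having a true cost $c^t(e)\in[0,\infty]$. If there exists at least one feasible path in $G$ from $s_0$ to $\mathcal{G}$, then MPLP run on this problem returns a solution.
   Context: Planning problem: vertices of $G$ are states, and each edge $e=\{s,a\}$ corresponds to applying a deterministic action $a$ at state $s$. Each edge has a true cost $c^t(e)$, computed by an (expensive) edge-evaluation routine, and a cheaply computable lazy cost $c^l(e)$ with $c^l(e)\le c^t(e)$. An edge is feasible if $c^t(e)<\infty$; a path is feasible if all its edges are feasible; the cost of a path is the sum of its edge costs. MPLP (Massively Parallel Lazy Planning) is the following algorithm. A search process repeatedly runs a weighted A* search (with heuristic inflation factor $\epsilon^h\ge 1$ and an admissible heuristic) from $s_0$ to $\mathcal{G}$ on the current graph, in which each edge's cost is its true cost if that edge has already been evaluated and its lazy cost otherwise. When a state is expanded, its outgoing edges are generated lazily (not evaluated) and every newly discovered edge is inserted into a priority queue $E^{open}$ of edges awaiting evaluation. Concurrently and asynchronously, a pool of threads repeatedly removes edges from $E^{open}$, evaluates them to obtain their true costs, marks them as evaluated, and updates their costs in the graph. When a search reaches a goal state, the resulting path is recorded (and the evaluation priority of its unevaluated edges is raised); a monitoring process waits for all edges of recorded paths to be evaluated, and MPLP returns a recorded path as the solution once it is found to be feasible with true cost not exceeding the goal $g$-value $goal\_g$ computed by the most recent search; otherwise searches are repeated on the updated graph. *)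

(* Abstract model of MPLP (Massively Parallel Lazy Planning)
   as a nondeterministic interleaving transition system of three kinds of
   processes: the search process (small-step weighted A-star), the edge-evaluation
   thread pool, and the monitoring process. *)
From HB Require Import structures.
From mathcomp Require Import all_boot all_order all_algebra.
Set Implicit Arguments. Unset Strict Implicit. Unset Printing Implicit Defensive.
Import Order.TTheory GRing.Theory Num.Theory.
Local Open Scope ring_scope.

(* Extended nonnegative costs: [Some c] is the finite cost c, [None] is +oo. *)
Section ExtCost.
Variable R : realFieldType.
Definition cadd (a b : option R) : option R :=
  match a, b with Some x, Some y => Some (x + y) | _, _ => None end.
Definition cle (a b : option R) : bool :=
  match a, b with
  | _, None => true
  | None, Some _ => false
  | Some x, Some y => x <= y
  end.
Definition clt (a b : option R) : bool :=
  match a, b with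
  | Some _, None => true
  | Some x, Some y => x < y
  | _, _ => false
  end.
End ExtCost.

(* A planning problem: finite directed (multi)graph with vertex type V and
   edge type Ed (edge e goes from src e to dst e), start s0, goal region,
   true costs ct (in [0,oo]), lazy costs cl, heuristic h, inflation eps. *)
Record problem (R : realFieldType) := Problem {
  V : finType;
  Ed : finType;
  src : Ed -> V;
  dst : Ed -> V;
  s0 : V;
  goal : {set V};
  ct : Ed -> option R;
  cl : Ed -> option R;
  h : V -> R;
  eps : R }.

Arguments src {R p} _.
Arguments dst {R p} _.
Arguments ct {R} p _.
Arguments cl {R} p _.
Arguments h {R} p _.
Arguments s0 {R} p.
Arguments goal {R} p.
Arguments eps {R} p.

Section MPLP.
Variables (R : realFieldType) (P : problem R).

Local Notation V := (V P).
Local Notation Ed := (Ed P).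

Fixpoint is_path (s : V) (q : seq Ed) : bool :=
  if q is e :: q' then (src e == s) && is_path (dst e) q' else true.
Fixpoint path_end (s : V) (q : seq Ed) : V :=
  if q is e :: q' then path_end (dst e) q' else s.
Definition path_cost (c : Ed -> option R) (q : seq Ed) : option R :=
  foldr (fun e acc => cadd (c e) acc) (Some 0) q.
Definition feasible_edge (e : Ed) : bool := ct P e != None.
Definition feasible (q : seq Ed) : bool := all feasible_edge q.

(* State of one weighted A-star search: g-values, stored back-pointer paths
   (path from s0 recorded along the parent pointers), OPEN and CLOSED. *)
Record sstate := SState {
  sg : V -> option R;
  sbp : V -> seq Ed;
  sopen : {set V};
  sclosed : {set V} }.

Record gstate := GState {
  evald : {set Ed};
  eopen : {set Ed};
  srch : option sstate;        (* current search (None: a new one starts) *)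
  recorded : seq (seq Ed);     (* recorded paths awaiting the monitor *)
  last_g : option R;           (* goal_g of the most recent search *)
  result : option (seq Ed) }.

Definition init_state : gstate := GState set0 set0 None [::] None None.

Definition cur (st : gstate) (e : Ed) : option R :=
  if e \in evald st then ct P e else cl P e.

Definition fval (ss : sstate) (v : V) : option R :=
  cadd (sg ss v) (Some (eps P * h P v)).

Definition init_search : sstate :=
  SState (fun v => if v == s0 P then Some 0 else None) (fun _ => [::])
         [set s0 P] set0.

Definition fmin (ss : sstate) (s : V) : Prop :=
  s \in sopen ss /\ forall t, t \in sopen ss -> cle (fval ss s) (fval ss t).

(* Expansion of s (reading the current edge costs in st) turns ss into ss'
   (weighted A-star without reopening: closed successors are ignored). *)
Definition expand (st : gstate) (ss : sstate) (s : V) (ss' : sstate) : Prop :=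
  let cand e := cadd (sg ss s) (cur st e) in
  sclosed ss' = s |: sclosed ss /\
  forall t : V,
    if t \in sclosed ss' then
      [/\ sg ss' t = sg ss t, sbp ss' t = sbp ss t & t \notin sopen ss']
    else if [exists e, [&& src e == s, dst e == t & clt (cand e) (sg ss t)]]
    then exists e, [/\ src e = s, dst e = t,
                       clt (cand e) (sg ss t),
                       (forall e', src e' = s -> dst e' = t ->
                          cle (cand e) (cand e')) &
                       [/\ sg ss' t = cand e,
                            sbp ss' t = rcons (sbp ss s) e &
                            t \in sopen ss']]
    else [/\ sg ss' t = sg ss t, sbp ss' t = sbp ss t &
             (t \in sopen ss') = (t \in sopen ss)].

Inductive search_step : gstate -> gstate -> Prop :=
| SStart st :
    result st = None -> srch st = None ->
    search_step st (GState (evald st) (eopen st) (Some init_search)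
                           (recorded st) (last_g st) None)
| SFail st ss :
    result st = None -> srch st = Some ss -> sopen ss = set0 ->
    search_step st (GState (evald st) (eopen st) None
                           (recorded st) None None)
| SGoal st ss s :
    result st = None -> srch st = Some ss -> fmin ss s -> s \in goal P ->
    search_step st (GState (evald st) (eopen st) None
                           (rcons (recorded st) (sbp ss s)) (sg ss s) None)
| SExpand st ss s ss' :
    result st = None -> srch st = Some ss -> fmin ss s -> s \notin goal P ->
    expand st ss s ss' ->
    search_step st
      (GState (evald st)
              (eopen st :|: [set e | (src e == s) &&
                                     (e \notin evald st :|: eopen st)])
              (Some ss') (recorded st) (last_g st) None).

Inductive eval_step : gstate -> gstate -> Prop :=
| EvalStep st e :
    result st = None -> e \in eopen st ->
    eval_step st (GState (e |: evald st) (eopen st :\ e) (srch st)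
                         (recorded st) (last_g st) None).

Inductive monitor_step (p : seq Ed) : gstate -> gstate -> Prop :=
| MAccept st :
    result st = None -> p \in recorded st -> all (fun e => e \in evald st) p ->
    feasible p -> cle (path_cost (ct P) p) (last_g st) ->
    monitor_step p st (GState (evald st) (eopen st) (srch st)
                              (recorded st) (last_g st) (Some p))
| MReject st :
    result st = None -> p \in recorded st -> all (fun e => e \in evald st) p ->
    ~~ (feasible p && cle (path_cost (ct P) p) (last_g st)) ->
    monitor_step p st (GState (evald st) (eopen st) (srch st)
                              (rem p (recorded st)) (last_g st) None).

Definition step (st st' : gstate) : Prop :=
  [\/ search_step st st', eval_step st st' | exists p, monitor_step p st st'].

Definition halted (st : gstate) : bool := result st != None.

(* An (infinite, possibly stuttering after halting) execution of MPLP. *)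
Definition is_run (ex : nat -> gstate) : Prop :=
  ex 0%N = init_state /\
  forall n, step (ex n) (ex n.+1) \/ (halted (ex n) /\ ex n.+1 = ex n).

Definition fair (ex : nat -> gstate) : Prop :=
  [/\ forall n, exists2 m, (n <= m)%N &
        search_step (ex m) (ex m.+1) \/ halted (ex m),
      forall n e, e \in eopen (ex n) -> exists2 m, (n <= m)%N &
        e \in evald (ex m) \/ halted (ex m) &
      forall n p, p \in recorded (ex n) -> all (fun e => e \in evald (ex n)) p ->
        exists2 m, (n <= m)%N & monitor_step p (ex m) (ex m.+1) \/ halted (ex m)].

End MPLP.

Arguments is_path {R} P s q.
Arguments path_end {R} P s q.
Arguments feasible {R} P q.
Arguments feasible_edge {R} P e.

From HB Require Import structures.
From mathcomp Require Import all_boot all_order all_algebra.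
From Stdlib Require Import Classical.
Set Implicit Arguments. Unset Strict Implicit. Unset Printing Implicit Defensive.
Import Order.TTheory GRing.Theory Num.Theory.
Local Open Scope ring_scope.

(* Suppose a fair run of MPLP never returns.  A search never empties OPEN:
   its CLOSED set would then be closed under feasible edges and contain s0,
   hence the end of the given feasible path, but goal states are never
   closed.  A search step that does not reach the goal starts a search or
   closes a new state, so searches keep reaching the goal.  The evaluated
   edges form an increasing chain in a finite set, so they eventually stop
   changing; by fairness E^open is then empty, every state expanded by a
   later search has all its outgoing edges evaluated, and the g-value of each
   path recorded afterwards is its true cost.  Such a path is feasible and
   fully evaluated, so the monitor must reject it: its cost exceeds the
   goal_g of a later search.  This gives an infinite strictly decreasing
   sequence of true costs of paths with at most |V| edges, impossible as
   there are finitely many such paths. *)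

Lemma bounded_homo_eventually_constant (f : nat -> nat) b :
  {homo f : m n / (m <= n)%N} -> (forall n, f n <= b)%N ->
  exists N, forall m, (N <= m)%N -> f m = f N.
Proof.
move=> f_homo f_le.
suff: forall k n, (b - f n <= k)%N -> exists N, forall m, (N <= m)%N -> f m = f N.
  by move/(_ b 0%N); apply; apply: leq_subr.
elim=> [|k IH] n le_k.
  exists n => m nm; apply/eqP; rewrite eqn_leq (f_homo _ _ nm) andbT.
  by apply: leq_trans (f_le m) _; rewrite -subn_eq0 -leqn0.
have [[m [nm lt_nm]]|stuck] := classic (exists m, (n <= m)%N /\ (f n < f m)%N).
  apply: (IH m); rewrite -ltnS (leq_trans _ le_k) // ltn_sub2l //.
  exact: leq_trans lt_nm (f_le m).
exists n => m nm; apply/eqP; rewrite eqn_leq (f_homo _ _ nm) andbT leqNgt.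
by apply/negP => lt_nm; apply: stuck; exists m.
Qed.

Lemma subset_chain_eventually_constant (T : finType) (A : nat -> {set T}) :
  (forall n, A n \subset A n.+1) -> exists N, forall m, (N <= m)%N -> A m = A N.
Proof.
move=> A_step.
have A_homo := homo_leq (@subxx _ _) (fun _ _ _ => @subset_trans _ _ _ _) A_step.
have [N cardN] := @bounded_homo_eventually_constant (fun n => #|A n|) #|T|
  (fun m n mn => subset_leq_card (A_homo m n mn)) (fun n => max_card _).
exists N => m Nm; apply/eqP; rewrite eq_sym eqEcard A_homo //=.
by rewrite cardN.
Qed.

Lemma no_infinite_descent (T : finType) d (X : porderType d) (f : T -> option X)
    (Q : X -> Prop) :
  (forall x, Q x -> exists t, f t = Some x) ->
  (forall x, Q x -> exists2 y, Q y & (y < x)%O) -> forall x, ~ Q x.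
Proof.
move=> Q_range Q_descent.
pose below x := [set t | if f t is Some y then (y < x)%O else false].
suff: forall n x, (#|below x| < n)%N -> ~ Q x by move=> H x; apply: H (ltnSn _).
elim=> // n IH x lt_n Qx.
have [y Qy lt_yx] := Q_descent x Qx; have [t ft] := Q_range y Qy.
have lt_below : (#|below y| < #|below x|)%N.
  apply: proper_card; apply/properP; split.
    by apply/subsetP => u; rewrite !inE; case: (f u) => // z /lt_trans; apply.
  by exists t; rewrite !inE ft ?ltxx.
by apply: IH Qy; apply: leq_trans lt_below _; rewrite -ltnS.
Qed.

Section ExtendedCosts.
Variable R : realFieldType.
Implicit Types a b c : option R.

Lemma caddA a b c : cadd a (cadd b c) = cadd (cadd a b) c.
Proof. by case: a; case: b; case: c => //= *; rewrite addrA. Qed.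

Lemma cadd_finite a b : (cadd a b != None) = (a != None) && (b != None).
Proof. by case: a; case: b. Qed.

Lemma cltNge a b : clt a b = ~~ cle b a.
Proof. by case: a; case: b => //= x y; rewrite ltNge. Qed.

Lemma clt_finite a b : clt a b -> a != None.
Proof. by case: a. Qed.

Lemma cle_finite a b : cle a b -> b != None -> a != None.
Proof. by case: a; case: b. Qed.

End ExtendedCosts.

Section Paths.
Variables (R : realFieldType) (P : problem R).

Lemma is_path_rcons v q e :
  is_path P v (rcons q e) = is_path P v q && (src e == path_end P v q).
Proof. by elim: q v => [|x q IH] v /=; rewrite ?andbT // IH andbA. Qed.

Lemma path_end_rcons v q e : path_end P v (rcons q e) = dst e.
Proof. by elim: q v => [|x q IH] v /=. Qed.

Lemma path_cost_rcons (c : Ed P -> option R) q e :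
  path_cost c (rcons q e) = cadd (path_cost c q) (c e).
Proof.
elim: q => [|x q IH] /=; last by rewrite IH caddA.
by case: (c e) => //= y; rewrite addr0 add0r.
Qed.

Lemma path_cost_finite (c : Ed P -> option R) q :
  (path_cost c q != None) = all (fun e => c e != None) q.
Proof. by elim: q => [|e q IH] //=; rewrite cadd_finite IH. Qed.

Lemma feasible_path_cost q : feasible P q = (path_cost (ct P) q != None).
Proof. by rewrite path_cost_finite. Qed.

End Paths.

Section Search.
Variables (R : realFieldType) (P : problem R).
Hypothesis cl_le_ct : forall e, cle (cl P e) (ct P e).

Lemma cur_finite st e : feasible_edge P e -> cur st e != None.
Proof.
rewrite /feasible_edge /cur; case: ifP => // _.
by have := cl_le_ct e; case: (cl P e) => //; case: (ct P e).
Qed.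

Section Expand.
Variables (st : gstate P) (ss : sstate P) (s : V P) (ss' : sstate P).
Hypothesis expand_s : expand st ss s ss'.
Local Notation cand e := (cadd (sg ss s) (cur st e)).

Lemma expand_closed : sclosed ss' = s |: sclosed ss.
Proof. by case: expand_s. Qed.

Lemma expand_closed_not_open t : t \in sclosed ss' -> t \notin sopen ss'.
Proof. by move=> tC; have := proj2 expand_s t; rewrite tC => -[]. Qed.

Lemma expand_cases t :
  [/\ sg ss' t = sg ss t, sbp ss' t = sbp ss t &
      t \notin sclosed ss' -> (t \in sopen ss') = (t \in sopen ss)]
  \/ exists2 e, [/\ src e = s, dst e = t & clt (cand e) (sg ss t)] &
       [/\ sg ss' t = cand e, sbp ss' t = rcons (sbp ss s) e & t \in sopen ss'].
Proof.
have := proj2 expand_s t; case: ifP => [_ [-> -> _]|_]; first by left.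
case: ifP => _; last by case=> -> -> tO; left.
by case=> e [es et lt _ [-> -> tO]]; right; exists e.
Qed.

Lemma expand_relax e : src e = s -> dst e \notin sclosed ss' ->
  cle (sg ss' (dst e)) (cand e).
Proof.
move=> es eC; have := proj2 expand_s (dst e); rewrite (negbTE eC).
case: ifP => [_|/negbT]; first by case=> e0 [_ _ _ min [-> _ _]]; exact: min.
rewrite negb_exists => /forallP /(_ e); rewrite es !eqxx /= cltNge negbK.
by move=> le [->].
Qed.

Lemma expand_reached t : sg ss t != None -> sg ss' t != None.
Proof.
by move=> gt; case: (expand_cases t) => [[-> _ _]|[e [_ _ /clt_finite fin] [-> _ _]]].
Qed.

End Expand.

Record search_inv (ss : sstate P) : Prop := SearchInv {
  seen_reached : forall v, (v \in sopen ss :|: sclosed ss) = (sg ss v != None);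
  closed_not_open : forall v, v \in sclosed ss -> v \notin sopen ss;
  s0_reached : sg ss (s0 P) != None;
  closed_succ_reached : forall e, feasible_edge P e -> src e \in sclosed ss ->
    sg ss (dst e) != None;
  closed_not_goal : forall v, v \in sclosed ss -> v \notin goal P;
  bp_path : forall v, sg ss v != None ->
    is_path P (s0 P) (sbp ss v) && (path_end P (s0 P) (sbp ss v) == v);
  bp_size : forall v, (size (sbp ss v) <= #|sclosed ss|)%N }.

Lemma init_search_inv : search_inv (init_search P).
Proof.
split=> //= [v|v||e _|v|v]; rewrite ?in_set0 ?eqxx //.
- by rewrite setU0 inE; case: eqP.
- by case: (v =P s0 P) => [->|].
Qed.

Lemma expand_search_inv st ss s ss' : search_inv ss -> s \in sopen ss ->
  s \notin goal P -> expand st ss s ss' -> search_inv ss'.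
Proof.
move=> inv sO sG E.
have gs : sg ss s != None by rewrite -(seen_reached inv) inE sO.
have closedE := expand_closed E.
have seen' : forall v, (v \in sopen ss' :|: sclosed ss') = (sg ss' v != None).
  move=> v; rewrite inE; case: (expand_cases E v) => [[-> _ oE]|[e [_ _ lt] [-> _ ->]]].
  - have [vC|vC] := boolP (v \in sclosed ss').
      move: vC; rewrite orbT closedE => /setU1P [->|vC]; first by rewrite gs.
      by rewrite -(seen_reached inv) inE vC orbT.
    move: (vC); rewrite closedE inE negb_or => /andP [_ vC0].
    by rewrite orbF oE // -(seen_reached inv) inE (negbTE vC0) orbF.
  - by rewrite (clt_finite lt).
split=> //.
- exact: expand_closed_not_open E.
- exact: expand_reached E _ (s0_reached inv).
- move=> e fe; rewrite closedE => /setU1P [es|eC]; last first.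
    exact: expand_reached E _ (closed_succ_reached inv fe eC).
  case dC: (dst e \in sclosed ss'); first by rewrite -seen' inE dC orbT.
  apply: cle_finite (expand_relax E es (negbT dC)) _.
  by rewrite cadd_finite gs cur_finite.
- by move=> v; rewrite closedE => /setU1P [->|/(closed_not_goal inv)].
- move=> v; case: (expand_cases E v) => [[-> -> _]|[e [es ev _] [_ -> _]] _].
    exact: bp_path inv v.
  case/andP: (bp_path inv gs) => p_s0 /eqP p_end.
  by rewrite is_path_rcons path_end_rcons es ev p_s0 p_end !eqxx.
- have sC : s \notin sclosed ss by apply: contraL sO; apply: closed_not_open.
  move=> v; rewrite closedE cardsU1 sC add1n.
  case: (expand_cases E v) => [[_ -> _]|[e _ [_ -> _]]].
    exact: leqW (bp_size inv v).
  by rewrite size_rcons ltnS bp_size.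
Qed.

Lemma search_inv_open_nonempty ss q : search_inv ss ->
  is_path P (s0 P) q -> path_end P (s0 P) q \in goal P -> feasible P q ->
  sopen ss != set0.
Proof.
move=> inv q_s0 q_goal q_feas; apply/eqP => open0.
have closed_reached v : (v \in sclosed ss) = (sg ss v != None).
  by rewrite -(seen_reached inv) open0 set0U.
have end_closed : forall v q', is_path P v q' -> feasible P q' ->
    v \in sclosed ss -> path_end P v q' \in sclosed ss.
  move=> v q'; elim: q' v => [|e q' IH] v //= /andP [/eqP ev pq] /andP [fe fq] vC.
  by apply: IH => //; rewrite closed_reached closed_succ_reached // ev.
have := end_closed _ _ q_s0 q_feas; rewrite closed_reached s0_reached // => /(_ isT).
by move/(closed_not_goal inv); rewrite q_goal.
Qed.

End Search.

Section Transitions.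
Variables (R : realFieldType) (P : problem R).
Hypothesis cl_le_ct : forall e, cle (cl P e) (ct P e).
Implicit Types (st : gstate P) (ss : sstate P).

Definition goal_path (p : seq (Ed P)) :=
  is_path P (s0 P) p && (path_end P (s0 P) p \in goal P).

Record mplp_inv (st : gstate P) : Prop := MplpInv {
  recorded_goal_path : forall p, p \in recorded st -> goal_path p;
  result_solution : forall p, result st = Some p -> goal_path p && feasible P p;
  srch_inv : forall ss, srch st = Some ss -> search_inv ss;
  eopen_unevaluated : forall e, e \in eopen st -> e \notin evald st }.

Lemma init_mplp_inv : mplp_inv (init_state P).
Proof. by split=> // e; rewrite in_set0. Qed.

Lemma step_mplp_inv st st' : step st st' -> mplp_inv st -> mplp_inv st'.
Proof.
case=> [[{}st _ _|{}st ss _ _ _|{}st ss s _ Hss [sO _] s_goal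
         |{}st ss s ss' _ Hss [sO _] s_ngoal E]
        |[{}st e _ _]|[p [{}st _ pR _ pF _|{}st _ pR _ _]]] inv;
  split=> //=; try exact: (recorded_goal_path inv); try exact: (result_solution inv);
  try exact: (srch_inv inv); try exact: (eopen_unevaluated inv).
- by move=> ss [<-]; apply: init_search_inv.
- move=> p; rewrite mem_rcons inE => /predU1P [->|]; last exact: (recorded_goal_path inv).
  have inv_ss := srch_inv inv Hss.
  have gs : sg ss s != None by rewrite -(seen_reached inv_ss) inE sO.
  case/andP: (bp_path inv_ss gs) => p_s0 /eqP p_end.
  by rewrite /goal_path p_s0 p_end s_goal.
- move=> ss1 [<-]; exact: (expand_search_inv cl_le_ct (srch_inv inv Hss) sO s_ngoal E).
- move=> e; rewrite !inE negb_or => /orP [/(eopen_unevaluated inv)|/and3P []] //.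
- move=> x; rewrite !inE negb_or => /andP [xe xO]; by rewrite xe (eopen_unevaluated inv xO).
- by move=> q [<-]; rewrite (recorded_goal_path inv pR).
- by move=> q /mem_rem /(recorded_goal_path inv).
Qed.

Definition goal_step (st st' : gstate P) : Prop :=
  exists ss s, [/\ srch st = Some ss, s \in sopen ss &
    st' = GState (evald st) (eopen st) None (rcons (recorded st) (sbp ss s))
                 (sg ss s) None].

Definition search_measure (st : gstate P) : nat :=
  if srch st is Some ss then (#|V P| - #|sclosed ss|)%N else #|V P|.+1.

Lemma step_evald_subset st st' : step st st' -> evald st \subset evald st'.
Proof. by case=> [[]|[] *|[p []]] //; apply: subsetUr. Qed.

Hypothesis solvable : exists q, [&& is_path P (s0 P) q, path_end P (s0 P) q \in goal P
                                  & feasible P q].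

Lemma search_step_cases st st' : search_step st st' -> mplp_inv st -> goal_step st st' \/
  (search_measure st' < search_measure st)%N /\ last_g st' = last_g st.
Proof.
have [q /and3P [q_s0 q_goal q_feas]] := solvable.
case=> [{}st _ Hss|{}st ss _ Hss open0|{}st ss s _ Hss [sO _] _
        |{}st ss s ss' _ Hss [sO _] _ E] inv; rewrite /search_measure /= ?Hss.
- by right; rewrite cards0 subn0.
- have := search_inv_open_nonempty (srch_inv inv Hss) q_s0 q_goal q_feas.
  by rewrite open0 eqxx.
- by left; exists ss, s.
- have sC : s \notin sclosed ss.
    by apply: contraL sO; exact: (closed_not_open (srch_inv inv Hss)).
  have closed_lt : (#|sclosed ss| < #|V P|)%N.
    by have := max_card (mem (s |: sclosed ss)); rewrite cardsU1 sC.
  by right; rewrite (expand_closed E) cardsU1 sC add1n ltn_sub2l.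
Qed.

Lemma step_cases st st' : step st st' -> mplp_inv st -> goal_step st st' \/
  (search_measure st' <= search_measure st)%N /\ last_g st' = last_g st.
Proof.
case=> [search inv|[] *|[p []] *]; try by right.
by case: (search_step_cases search inv) => [goal|[lt ->]]; [left | right; rewrite ltnW].
Qed.

Lemma monitor_step_rejects p st st' :
  monitor_step p st st' -> result st' = None ->
  ~~ (feasible P p && cle (path_cost (ct P) p) (last_g st)).
Proof. by case. Qed.

End Transitions.

Section EvaluatedSearch.
Variables (R : realFieldType) (P : problem R).
Implicit Types (st : gstate P) (ss : sstate P).

Definition evaluated_search (E : {set Ed P}) ss := forall v, sg ss v != None ->
  sg ss v = path_cost (ct P) (sbp ss v) /\ all (fun e => e \in E) (sbp ss v).

Lemma init_evaluated_search E : evaluated_search E (init_search P).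
Proof. by move=> v /=; case: (v =P s0 P). Qed.

Lemma expand_evaluated_search st ss s ss' :
  (forall e, src e = s -> e \in evald st) -> expand st ss s ss' ->
  evaluated_search (evald st) ss -> evaluated_search (evald st) ss'.
Proof.
move=> out_evald E ev v; case: (expand_cases E v) => [[-> -> _]|[e [es _ lt] [-> -> _]] _].
  exact: ev.
have [gs _] : sg ss s != None /\ cur st e != None.
  by apply/andP; rewrite -cadd_finite (clt_finite lt).
have [gs_cost gs_evald] := ev s gs.
by rewrite /cur out_evald // gs_cost path_cost_rcons all_rcons out_evald.
Qed.

Lemma step_evaluated_search st st' : step st st' ->
  eopen st = set0 -> eopen st' = set0 ->
  (forall ss, srch st = Some ss -> evaluated_search (evald st) ss) ->
  forall ss, srch st' = Some ss -> evaluated_search (evald st) ss.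
Proof.
case=> [[{}st _ _|{}st *|{}st *|{}st ss s ss' _ Hss _ _ E]|[{}st e _]|[p []]] //=.
- by move=> _ _ _ ss [<-]; apply: init_evaluated_search.
- move=> open0 open0' ev ss1 [<-]; apply: expand_evaluated_search E (ev _ Hss) => e es.
  move: open0'; rewrite open0 set0U => /setP /(_ e); by rewrite !inE es eqxx orbF => /negbFE.
Qed.

End EvaluatedSearch.

Section Run.
Variables (R : realFieldType) (P : problem R) (ex : nat -> gstate P).
Hypothesis cl_le_ct : forall e, cle (cl P e) (ct P e).
Hypothesis solvable : exists q, [&& is_path P (s0 P) q, path_end P (s0 P) q \in goal P
                                  & feasible P q].
Hypotheses (ex_run : is_run ex) (ex_fair : fair ex).

Lemma run_inv n : mplp_inv (ex n).
Proof.
elim: n => [|n IH]; first by rewrite (proj1 ex_run); apply: init_mplp_inv.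
case: (proj2 ex_run n) => [step_n|[_ ->] //].
exact: (step_mplp_inv cl_le_ct step_n IH).
Qed.

Section NeverReturns.
Hypothesis never_returns : forall n, result (ex n) = None.

Lemma run_step n : step (ex n) (ex n.+1).
Proof. by case: (proj2 ex_run n) => // -[]; rewrite /halted never_returns. Qed.

Lemma run_search_step n : exists2 m, (n <= m)%N & search_step (ex m) (ex m.+1).
Proof.
have [F _ _] := ex_fair; have [m nm [search|]] := F n; first by exists m.
by rewrite /halted never_returns.
Qed.

Lemma run_goal_step_or_measure_le n m : (n <= m)%N ->
  (exists2 k, (n <= k < m)%N & goal_step (ex k) (ex k.+1)) \/
  (search_measure (ex m) <= search_measure (ex n))%N.
Proof.
elim: m => [|m IH]; first by rewrite leqn0 => /eqP ->; right.
rewrite leq_eqVlt => /predU1P [<-|]; first by right.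
rewrite ltnS => nm; case: (IH nm) => [[k /andP [nk km] gk]|le_nm].
  by left; exists k; rewrite // nk ltnS ltnW.
case: (step_cases solvable (run_step m) (run_inv m)) => [gm|[le_m _]].
  by left; exists m; rewrite // nm ltnSn.
by right; apply: leq_trans le_m le_nm.
Qed.

Lemma run_goal_step n : exists2 m, (n <= m)%N & goal_step (ex m) (ex m.+1).
Proof.
elim: (search_measure (ex n)).+1 {-2}n (ltnSn (search_measure (ex n))) => // k IH {}n lt_k.
have [m nm search] := run_search_step n.
case: (run_goal_step_or_measure_le nm) => [[j /andP [nj _] gj]|le_mn]; first by exists j.
case: (search_step_cases solvable search (run_inv m)) => [gm|[lt_m _]]; first by exists m.
have [j mj gj] := IH m.+1 (leq_trans lt_m (leq_trans le_mn lt_k)).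
by exists j => //; apply: leq_trans (ltnW mj).
Qed.

Lemma run_latest_goal_step m0 m : (m0 < m)%N -> goal_step (ex m0) (ex m0.+1) ->
  exists k, [/\ (m0 <= k < m)%N, goal_step (ex k) (ex k.+1) &
              last_g (ex m) = last_g (ex k.+1)].
Proof.
move=> + g0; elim: m => // m IH; rewrite ltnS leq_eqVlt => /predU1P [<-|lt_m0].
  by exists m0; rewrite leqnn ltnSn.
case: (step_cases solvable (run_step m) (run_inv m)) => [gm|[_ ->]].
  by exists m; rewrite ltnSn ltnW.
have [k [/andP [m0k km] gk eq_k]] := IH lt_m0.
by exists k; rewrite m0k ltnS ltnW.
Qed.

Lemma run_evald_stable : exists N, forall m, (N <= m)%N -> evald (ex m) = evald (ex N).
Proof.
apply: subset_chain_eventually_constant => n.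
exact: step_evald_subset (run_step n).
Qed.

Lemma run_search_idle n : exists2 m, (n <= m)%N & srch (ex m) = None.
Proof.
have [m nm [ss [s [_ _ next]]]] := run_goal_step n.
by exists m.+1; rewrite ?next ?leqW.
Qed.

Section Settled.
Variable N : nat.
Hypothesis evald_stable : forall m, (N <= m)%N -> evald (ex m) = evald (ex N).

Lemma run_eopen_empty m : (N <= m)%N -> eopen (ex m) = set0.
Proof.
move=> Nm; apply/setP => e; rewrite in_set0; apply/negP => eO.
have [_ F _] := ex_fair; have [m' mm' [e_evald|]] := F m e eO; last first.
  by rewrite /halted never_returns.
have := eopen_unevaluated (run_inv m) eO.
by rewrite evald_stable // -(evald_stable (leq_trans Nm mm')) e_evald.
Qed.

Variable n1 : nat.
Hypotheses (N_n1 : (N <= n1)%N) (n1_idle : srch (ex n1) = None).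

Lemma run_evaluated_search m ss : (n1 <= m)%N -> srch (ex m) = Some ss ->
  evaluated_search (evald (ex N)) ss.
Proof.
elim: m ss => [|m IH] ss; first by rewrite leqn0 => /eqP <-; rewrite n1_idle.
rewrite leq_eqVlt => /predU1P [<-|]; first by rewrite n1_idle.
rewrite ltnS => n1m; have Nm := leq_trans N_n1 n1m.
rewrite -(evald_stable Nm).
apply: step_evaluated_search (run_step m) _ _ _ ss; rewrite ?run_eopen_empty ?(leqW Nm) //.
by move=> ss' /IH; rewrite evald_stable //; apply.
Qed.

Lemma run_goal_step_record m : (n1 <= m)%N -> goal_step (ex m) (ex m.+1) ->
  exists2 p, p \in recorded (ex m.+1) &
    [/\ last_g (ex m.+1) = path_cost (ct P) p, last_g (ex m.+1) != None,
        all (fun e => e \in evald (ex m.+1)) p & (size p <= #|V P|)%N].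
Proof.
move=> n1m [ss [s [Hss sO ->]]] /=; exists (sbp ss s); first by rewrite mem_rcons mem_head.
have inv := srch_inv (run_inv m) Hss.
have gs : sg ss s != None by rewrite -(seen_reached inv) inE sO.
have [cost_s evald_s] := run_evaluated_search n1m Hss gs.
rewrite evald_stable ?(leq_trans N_n1 n1m) //.
split=> //; apply: leq_trans (bp_size inv s) (max_card _).
Qed.

Definition late_goal_value (c : R) :=
  exists m, [/\ (n1 <= m)%N, goal_step (ex m) (ex m.+1) & last_g (ex m.+1) = Some c].

Lemma late_goal_value_exists : exists c, late_goal_value c.
Proof.
have [m n1m gm] := run_goal_step n1.
have [p _ [_ g_fin _ _]] := run_goal_step_record n1m gm.
by move: g_fin; case g: (last_g _) => [c|] // _; exists c, m.
Qed.

Lemma late_goal_value_path c : late_goal_value c ->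
  exists b : #|V P|.-bseq (Ed P), path_cost (ct P) b = Some c.
Proof.
move=> [m [n1m gm gc]]; have [p _ [g_cost _ _ size_p]] := run_goal_step_record n1m gm.
by exists (Bseq size_p); rewrite /= -g_cost.
Qed.

Lemma late_goal_value_descent c : late_goal_value c ->
  exists2 c', late_goal_value c' & c' < c.
Proof.
move=> [m [n1m gm gc]]; have [p pR [g_cost _ p_evald _]] := run_goal_step_record n1m gm.
have [_ _ F] := ex_fair; have [m' mm' [mon|]] := F _ _ pR p_evald; last first.
  by rewrite /halted never_returns.
have := monitor_step_rejects mon (never_returns _).
have [k [/andP [mk km'] gk ->]] := run_latest_goal_step mm' gm.
have [_ _ [_ gk_fin _ _]] := run_goal_step_record (leq_trans n1m mk) gk.
move: gk_fin; case gk_val: (last_g (ex k.+1)) => [c'|] // _.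
rewrite feasible_path_cost -g_cost gc /= -ltNge => lt_c.
by exists c' => //; exists k; rewrite (leq_trans n1m mk).
Qed.

End Settled.

Lemma nonreturning_run_absurd : False.
Proof.
have [N evald_stable] := run_evald_stable.
have [n1 N_n1 n1_idle] := run_search_idle N.
have [c c_late] := late_goal_value_exists evald_stable N_n1 n1_idle.
exact: no_infinite_descent (late_goal_value_path evald_stable N_n1 n1_idle)
  (late_goal_value_descent evald_stable N_n1 n1_idle) _ c_late.
Qed.

End NeverReturns.

Lemma run_returns : exists n p, result (ex n) = Some p.
Proof.
apply: NNPP => none; apply: nonreturning_run_absurd => n.
by case res: (result (ex n)) => [p|] //; case: none; exists n, p.
Qed.

End Run.

Theorem theorem1 (R : realFieldType) (P : problem R) :
  1 <= eps P ->
  (* true costs in [0, oo] *)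
  (forall e c, ct P e = Some c -> 0 <= c) ->
  (* lazy costs are nonnegative and underestimate the true costs *)
  (forall e c, cl P e = Some c -> 0 <= c) ->
  (forall e, cle (cl P e) (ct P e)) ->
  (* admissible heuristic *)
  (forall v, 0 <= h P v) ->
  (forall v q, is_path P v q -> path_end P v q \in goal P -> feasible P q ->
     cle (Some (h P v)) (path_cost (ct P) q)) ->
  (* there is a feasible path from s0 to the goal region *)
  (exists q, [&& is_path P (s0 P) q, path_end P (s0 P) q \in goal P
               & feasible P q]) ->
  (* then every fair execution of MPLP returns a solution *)
  forall ex : nat -> gstate P, is_run ex -> fair ex ->
  exists n p, result (ex n) = Some p /\
    [&& is_path P (s0 P) p, path_end P (s0 P) p \in goal P & feasible P p].
Proof.
move=> _ _ _ cl_le_ct _ _ solvable ex ex_run ex_fair.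
have [n [p res]] := run_returns cl_le_ct solvable ex_run ex_fair.
exists n, p; split=> //; rewrite andbA.
exact: (result_solution (run_inv cl_le_ct ex_run n) res).
Qed.
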